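(* Let $\rho$ be a density operator and $\sigma$ a non-negative operator on a finite-dimensional Hilbert space, and let $1\ge\epsilon>\epsilon'\ge0$. Then $$D_H^\epsilon(\rho\|\sigma)\le D_{\max}^{\epsilon'}(\rho\|\sigma)+\log_2\frac{\epsilon}{\epsilon-\epsilon'}.$$
   Context: The fidelity is $F(\rho,\sigma)=\|\sqrt\rho\sqrt\sigma\|_1$. For non-negative $\rho,\sigma$ and $\epsilon\in(0,\mathrm{tr}(\rho)]$, the generalised relative entropy is defined by $2^{-D_H^\epsilon(\rho\|\sigma)}=\inf\{\mathrm{tr}(Q\sigma)/\epsilon:\ 0\le Q\le\mathrm{id},\ \mathrm{tr}(Q\rho)\ge\epsilon\}$. For a density operator $\rho$ and $\epsilon\ge0$, the $\epsilon$-smooth max-relative entropy is defined by $2^{-D_{\max}^\epsilon(\rho\|\sigma)}=\sup\{\mu:\ \mu\bar\rho\le\sigma,\ 1-F(\bar\rho,\rho)^2\le\epsilon^2\}$, the supremum over non-negative operators $\bar\rho$ with $\mathrm{tr}(\bar\rho)\le1$ and reals $\mu$. In both cases the relative entropy is $\infty$ when the right-hand side is $0$. *)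

From HB Require Import structures.
From mathcomp Require Import all_boot all_order all_algebra.
From mathcomp Require Import complex.
From mathcomp Require Import boolp classical_sets reals constructive_ereal ereal exp.
Set Implicit Arguments. Unset Strict Implicit. Unset Printing Implicit Defensive.
Import Order.TTheory GRing.Theory Num.Theory.
Local Open Scope ring_scope.
Local Open Scope classical_set_scope.
Local Open Scope complex_scope.

(* Operators on the finite-dimensional Hilbert space C^n are n x n complex
   matrices, with complex numbers R[i] over a real field R : realType. *)

Section Quantum.
Variable R : realType.
Local Notation C := R[i].
Variable n : nat.
Local Notation M := 'M[C]_n.

Definition adjmx (A : 'M[C]_(n, n)) : M := (map_mx (@conjc R) A)^T.

Definition psd (A : M) : Prop :=
  adjmx A = A /\ forall v : 'cV[C]_n, 0 <= ((map_mx (@conjc R) v)^T *m A *m v) 0 0.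

Definition loewner (A B : M) : Prop := psd (B - A).

Definition density (rho : M) : Prop := psd rho /\ \tr rho = 1.

(* the (unique) non-negative square root of a non-negative operator;
   (defined as 0 on operators having no non-negative square root) *)
Definition psd_sqrt (A : M) : M :=
  match pselect (exists B : M, psd B /\ B *m B = A) with
  | left H => projT1 (cid H)
  | right _ => 0
  end.

Definition trnorm (X : M) : R := @complex.Re R (\tr (psd_sqrt (adjmx X *m X))).

Definition fidelity (rho sigma : M) : R := trnorm (psd_sqrt rho *m psd_sqrt sigma).

Definition log2 (x : R) : R := ln x / ln 2.

Definition neglog2 (x : \bar R) : \bar R :=
  match x with
  | EFin r => if r <= 0 then +oo%E else (- log2 r)%:E
  | +oo%E => -oo%E
  | -oo%E => +oo%E
  end.

(* 2^{-D_H^eps(rho||sigma)} = inf { tr(Q sigma)/eps : 0 <= Q <= id, tr(Q rho) >= eps } *)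
Definition DH_set (eps : R) (rho sigma : M) : set R :=
  [set x | exists Q : M, [/\ psd Q, loewner Q 1%:M,
       eps%:C <= \tr (Q *m rho) & x%:C = \tr (Q *m sigma) / eps%:C]].

Definition DH (eps : R) (rho sigma : M) : \bar R :=
  neglog2 (ereal_inf [set x%:E | x in DH_set eps rho sigma]).

(* 2^{-D_max^eps(rho||sigma)} = sup { mu : mu rhobar <= sigma, 1 - F(rhobar,rho)^2 <= eps^2 },
   over non-negative rhobar with tr rhobar <= 1 and real mu *)
Definition Dmax_set (eps : R) (rho sigma : M) : set R :=
  [set mu | exists rhob : M, [/\ psd rhob, \tr rhob <= 1,
       loewner (mu%:C *: rhob) sigma &
       1 - fidelity rhob rho ^+ 2 <= eps ^+ 2]].

Definition Dmax (eps : R) (rho sigma : M) : \bar R :=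
  neglog2 (ereal_sup [set x%:E | x in Dmax_set eps rho sigma]).

End Quantum.

(* Let Q be a test feasible for D_H^eps, with tr(Q rho) >= eps and tr(Q sigma) = x eps,
   and let (mu, rhob) be feasible for D_max^eps', with mu rhob <= sigma and
   1 - F(rhob, rho)^2 <= eps'^2.  Measuring with {Q, 1 - Q} cannot increase the
   fidelity: writing a = tr(Q rho) and b = tr(Q rhob),
     F(rhob, rho) <= sqrt(b a) + sqrt((tr rhob - b)(1 - a)),
   by the polar decomposition of sqrt(rhob) sqrt(rho) and the Cauchy-Schwarz
   inequality for tr(A^* N B); the square of the right-hand side is at most
   1 - (a - b)^2.  Hence b >= a - eps' >= eps - eps', and
   mu (eps - eps') <= mu b <= tr(Q sigma) = x eps.  Passing to the infimum over Q
   and the supremum over mu gives the inequality between the -log2 quantities. *)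

From HB Require Import structures.
From mathcomp Require Import all_boot all_order all_algebra.
From mathcomp Require Import complex spectral sesquilinear.
From mathcomp Require Import ring lra.
From mathcomp Require Import boolp classical_sets reals constructive_ereal ereal exp.
Import Order.TTheory GRing.Theory Num.Theory.
Local Open Scope ring_scope.
Local Open Scope complex_scope.

Set Implicit Arguments. Unset Strict Implicit. Unset Printing Implicit Defensive.

Local Notation cRe := complex.Re.

Section RealInequalities.
Variable R : rcfType.

Lemma le_sqrt_of_quadratic_ge0 (p q x : R) : 0 <= p -> 0 <= q ->
  (forall s, 0 < s -> 0 <= s ^+ 2 * p - 2 * s * x + q) -> x <= Num.sqrt (p * q).
Proof.
move=> p0 q0 hquad.
have [x0|xpos] := lerP x 0; first exact: le_trans x0 (sqrtr_ge0 _).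
have [pz|ppos] := eqVneq p 0.
  have := hquad ((q + 1) / x) (divr_gt0 (ltr_pwDr ltr01 q0) xpos).
  suff -> : ((q + 1) / x) ^+ 2 * p - 2 * ((q + 1) / x) * x + q = - q - 2 by lra.
  by rewrite pz; field; rewrite gt_eqF.
have pp : 0 < p by rewrite lt_neqAle eq_sym ppos p0.
have := hquad (x / p) (divr_gt0 xpos pp).
have -> : (x / p) ^+ 2 * p - 2 * (x / p) * x + q = q - x ^+ 2 / p.
  by field; rewrite gt_eqF.
rewrite subr_ge0 ler_pdivrMr // => hx.
rewrite -(ger0_norm (ltW xpos)) -sqrtr_sqr; apply: ler_wsqrtr.
by rewrite mulrC.
Qed.

Lemma sqr_sqrt_mix_le (a b : R) : 0 <= a <= 1 -> 0 <= b <= 1 ->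
  (Num.sqrt (b * a) + Num.sqrt ((1 - b) * (1 - a))) ^+ 2 <= 1 - (a - b) ^+ 2.
Proof.
move=> /andP[a0 a1] /andP[b0 b1].
have nnegM (u v : R) : 0 <= u -> 0 <= v -> Num.sqrt (u * v) ^+ 2 = u * v.
  by move=> u0 v0; rewrite sqr_sqrtr // mulr_ge0.
set w := Num.sqrt (a * (1 - a)); set z := Num.sqrt (b * (1 - b)).
(* the cross term is sqrt(a(1-a)) sqrt(b(1-b)), bounded by AM-GM *)
have cross : Num.sqrt (b * a) * Num.sqrt ((1 - b) * (1 - a)) = w * z.
  rewrite -!sqrtrM ?mulr_ge0 ?subr_ge0 //; congr Num.sqrt; ring.
have amgm : 2 * (w * z) <= w ^+ 2 + z ^+ 2.
  have := sqr_ge0 (w - z); rewrite sqrrB; lra.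
rewrite sqrrD cross !nnegM ?subr_ge0 // in amgm *; lra.
Qed.

Lemma sub_le_of_fidelity_le (a b b' F e : R) :
  0 <= a <= 1 -> 0 <= b -> 0 <= b' -> b + b' <= 1 -> 0 <= F ->
  F <= Num.sqrt (b * a) + Num.sqrt (b' * (1 - a)) ->
  1 - F ^+ 2 <= e ^+ 2 -> 0 <= e -> a - e <= b.
Proof.
move=> /andP[a0 a1] b0 b'0 bb' F0 hF hF2 e0.
have mix := @sqr_sqrt_mix_le a b.
have b'le : Num.sqrt (b' * (1 - a)) <= Num.sqrt ((1 - b) * (1 - a)).
  by apply/ler_wsqrtr/ler_wpM2r; lra.
have F2 : F ^+ 2 <= 1 - (a - b) ^+ 2.
  apply: le_trans (mix _ _); last 2 first; [lra|lra|].
  rewrite ler_sqr ?nnegrE ?addr_ge0 ?sqrtr_ge0 //; lra.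
have [ab|ab] := lerP a b; first lra.
suff : a - b <= e by lra.
by rewrite -ler_sqr ?nnegrE ?subr_ge0 ?(ltW ab) //; lra.
Qed.

End RealInequalities.

Section NegLog2.
Variable R : realType.
Local Open Scope classical_set_scope.

Lemma log2_le_add (m s c : R) : 0 < m -> 0 < s -> 0 < c -> m <= s * c ->
  log2 m <= log2 s + log2 c.
Proof.
move=> m0 s0 c0 msc.
have ln2 : 0 < ln (2 : R) by apply: ln_gt0; lra.
rewrite /log2 -mulrDl ler_pM2r ?invr_gt0 // -lnM ?posrE //.
by rewrite ler_ln ?posrE ?mulr_gt0.
Qed.

Lemma neglog2_inf_le_sup (A B : set R) (c : R) : 0 < c ->
  (forall x mu, A x -> B mu -> mu <= x * c) ->
  (neglog2 (ereal_inf [set x%:E | x in A]) <=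
   neglog2 (ereal_sup [set x%:E | x in B]) + (log2 c)%:E)%E.
Proof.
move=> c0 AB.
case: (pselect (exists x, A x)) => [[x0 Ax0]|A0]; last first.
  have -> : [set x%:E | x in A] = set0.
    by apply/seteqP; split=> // y [x Ax _]; case: A0; exists x.
  by rewrite ereal_inf0 /= leNye.
have supB x : A x -> (ereal_sup [set mu%:E | mu in B] <= (x * c)%:E)%E.
  by move=> Ax; apply: ge_ereal_sup => _ [mu Bmu <-]; rewrite lee_fin AB.
case eB: (ereal_sup _) (supB _ Ax0) => [m| |] //= _; last by rewrite leey.
case: ifPn => [_|]; first by rewrite leey.
rewrite -ltNge => m0.
have infA : ((m / c)%:E <= ereal_inf [set x%:E | x in A])%E.
  apply: le_ereal_inf_tmp => _ [x Ax <-].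
  by rewrite lee_fin ler_pdivrMr // -lee_fin -eB supB.
case eA: (ereal_inf _) infA => [s| |] //= infA; last by rewrite leNye.
rewrite lee_fin in infA.
have s0 : 0 < s by apply: lt_le_trans infA; apply: divr_gt0.
rewrite (leNgt s 0) s0 /= -EFinD lee_fin.
suff : log2 m <= log2 s + log2 c by lra.
by apply: log2_le_add => //; rewrite -ler_pdivrMr.
Qed.
End NegLog2.

Section ComplexParts.
Variable R : rcfType.

Lemma Re_le (z w : R[i]) : z <= w -> cRe z <= cRe w.
Proof. by rewrite lecE => /andP[]. Qed.

Lemma Re_ge0 (z : R[i]) : 0 <= z -> 0 <= cRe z.
Proof. exact: Re_le. Qed.

Lemma Re_real_mul (r : R) (z : R[i]) : cRe (r%:C * z) = r * cRe z.
Proof. by case: z => a b /=; rewrite mul0r subr0. Qed.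

Lemma conjc_ge0 (z : R[i]) : 0 <= z -> z^* = z.
Proof. by case: z => a b; rewrite lecE /= => /andP[/eqP -> _]; rewrite oppr0. Qed.

End ComplexParts.

Section PositiveOperators.
Variables (R : realType) (n : nat).
Local Notation C := R[i].
Local Notation M := 'M[C]_n.
Local Notation adj := (@adjmx R n).

Lemma adjmxE (A : M) : adj A = (A ^t* )%sesqui.
Proof. by rewrite /adjmx map_trmx. Qed.

Lemma adjmxK (A : M) : adj (adj A) = A.
Proof. by rewrite !adjmxE trmxCK. Qed.

Lemma adjmxM (A B : M) : adj (A *m B) = adj B *m adj A.
Proof. by rewrite /adjmx map_mxM trmx_mul. Qed.

Lemma adjmxB (A B : M) : adj (A - B) = adj A - adj B.
Proof. by apply/matrixP=> i j; rewrite !mxE rmorphB. Qed.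

Lemma adjmxZ (a : C) (A : M) : adj (a *: A) = a^* *: adj A.
Proof. by apply/matrixP=> i j; rewrite !mxE rmorphM. Qed.

Lemma adjmx1 : adj 1%:M = 1%:M.
Proof. by rewrite /adjmx map_mx1 trmx1. Qed.

Lemma mxtrace_adjmx (A : M) : \tr (adj A) = (\tr A)^*.
Proof.
rewrite /adjmx mxtrace_tr /mxtrace rmorph_sum; apply: eq_bigr => i _.
by rewrite mxE.
Qed.

Lemma psd_adjmx (A : M) : psd A -> adj A = A.
Proof. by case. Qed.

Lemma psd_congruence (A B : M) : psd A -> psd (adj B *m A *m B).
Proof.
move=> [hA pA]; split; first by rewrite !adjmxM adjmxK hA mulmxA.
by move=> v; have := pA (B *m v); rewrite map_mxM trmx_mul !mulmxA.
Qed.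

Lemma psd_diag_ge0 (A : M) i : psd A -> 0 <= A i i.
Proof.
move=> [_ pA]; have := pA (delta_mx i 0).
have -> : map_mx conjc (delta_mx i 0 : 'cV[C]_n) = delta_mx i 0.
  by apply/matrixP=> a b; rewrite !mxE; case: (_ && _); rewrite ?conjc1 ?conjc0.
by rewrite trmx_delta -rowE -colE !mxE.
Qed.

Lemma psd_mxtrace_ge0 (A : M) : psd A -> 0 <= \tr A.
Proof. by move=> pA; apply: sumr_ge0 => i _; apply: psd_diag_ge0. Qed.

Lemma psd_diag_mx (d : 'rV[C]_n) : (forall i, 0 <= d 0 i) -> psd (diag_mx d).
Proof.
move=> d0; split.
  apply/matrixP=> i j; rewrite !mxE; case: (eqVneq j i) => [->|ne].
    by rewrite !mulr1n conjc_ge0.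
  by rewrite !mulr0n conjc0.
move=> v; rewrite mul_mx_diag mxE; apply: sumr_ge0 => i _.
by rewrite !mxE mulrC mulrA mulr_ge0 //; have := mulcJ_ge0 (v i 0); rewrite mulrC.
Qed.

Lemma psd1 : psd (1%:M : M).
Proof. by rewrite -diag_const_mx; apply: psd_diag_mx => i; rewrite mxE ler01. Qed.

Lemma psd_gram (X : M) : psd (adj X *m X).
Proof. by rewrite -[adj X]mulmx1; apply: psd_congruence psd1. Qed.

Lemma psd0 : psd (0 : M).
Proof. by have := psd_congruence 0 psd1; rewrite mulmx0. Qed.

Lemma unitary_diag_mulmx (V : M) (d e : 'rV[C]_n) : V *m adj V = 1%:M ->
  (adj V *m diag_mx d *m V) *m (adj V *m diag_mx e *m V) =
  adj V *m diag_mx (\row_j (d 0 j * e 0 j)) *m V.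
Proof.
move=> VV; rewrite !mulmxA -(mulmxA _ V) VV mulmx1 -(mulmxA _ (diag_mx d)).
by rewrite mulmx_diag.
Qed.

Lemma psd_spectral (A : M) : psd A -> exists (V : M) (d : 'rV[C]_n),
  [/\ V *m adj V = 1%:M, A = adj V *m diag_mx d *m V & forall i, 0 <= d 0 i].
Proof.
move=> pA.
have hA : A \is hermsymmx.
  by apply/is_hermitianmxP; rewrite expr0 scale1r -adjmxE psd_adjmx.
have /orthomx_spectralP eA := hermitian_normalmx hA.
have uP := spectral_unitarymx A.
set V := spectralmx A in eA uP; set d := spectral_diag A in eA.
have VV : V *m adj V = 1%:M by rewrite adjmxE; apply/unitarymxP.
have {}eA : A = adj V *m diag_mx d *m V by rewrite adjmxE -invmx_unitary.
exists V, d; split=> // i.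
have pD : psd (diag_mx d).
  have -> : diag_mx d = adj (adj V) *m A *m adj V.
    by rewrite adjmxK eA !mulmxA VV mul1mx -mulmxA VV mulmx1.
  exact: psd_congruence.
by have := psd_diag_ge0 i pD; rewrite mxE eqxx mulr1n.
Qed.

Lemma psd_sqrt_psd (A : M) : psd (psd_sqrt A).
Proof.
by rewrite /psd_sqrt; case: pselect => [H|_]; [case: (cid H) => B [] | exact: psd0].
Qed.

Lemma psd_sqrtK (A : M) : psd A -> psd_sqrt A *m psd_sqrt A = A.
Proof.
move=> pA; rewrite /psd_sqrt; case: pselect => [H|[]]; first by case: (cid H) => B [].
have [V [d [VV -> d0]]] := psd_spectral pA.
pose e := \row_j sqrtC (d 0 j).
exists (adj V *m diag_mx e *m V); split.
  by apply: psd_congruence; apply: psd_diag_mx => i; rewrite mxE sqrtC_ge0.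
rewrite unitary_diag_mulmx //; congr (_ *m diag_mx _ *m _).
by apply/rowP=> j; rewrite !mxE -expr2 sqrtCK.
Qed.

Lemma psd_mxtrace_mul_ge0 (A B : M) : psd A -> psd B -> 0 <= \tr (A *m B).
Proof.
move=> pA pB; rewrite -(psd_sqrtK pA) -mulmxA mxtrace_mulC.
rewrite -{1}(psd_adjmx (psd_sqrt_psd A)).
exact/psd_mxtrace_ge0/psd_congruence.
Qed.

Lemma psd_pinv (S : M) : psd S -> exists T : M,
  [/\ adj T = T, T *m (S *m S) = S & T *m T *m (S *m S) *m T *m T = T *m T].
Proof.
move=> pS; have [V [d [VV eS d0]]] := psd_spectral pS.
pose f (e : 'rV[C]_n) := adj V *m diag_mx e *m V.
pose di := \row_j (d 0 j)^-1.
exists (f di); rewrite eS -/(f d) /f !unitary_diag_mulmx //; split.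
- rewrite psd_adjmx //; apply: psd_congruence; apply: psd_diag_mx => j.
  by rewrite mxE invr_ge0.
- congr (_ *m diag_mx _ *m _); apply/rowP=> j; rewrite !mxE.
  have [->|nz] := eqVneq (d 0 j) 0; first by rewrite !mulr0.
  by rewrite mulrA mulVf // mul1r.
- congr (_ *m diag_mx _ *m _); apply/rowP=> j; rewrite !mxE.
  have [->|nz] := eqVneq (d 0 j) 0; first by rewrite invr0 !mul0r.
  by field.
Qed.

Lemma mxtrace_mul_proj_le (N P : M) : adj P = P -> P *m P = P -> psd N ->
  \tr (N *m P) <= \tr N.
Proof.
move=> hP iP pN; pose K := 1%:M - P.
have hK : adj K = K by rewrite /K adjmxB adjmx1 hP.
have iK : K *m K = K.
  by rewrite /K mulmxBl !mulmxBr !mul1mx !mulmx1 iP subrr subr0.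
rewrite -subr_ge0.
have -> : \tr N - \tr (N *m P) = \tr (adj K *m N *m K).
  rewrite hK [in RHS]mxtrace_mulC mulmxA iK /K mulmxBl mul1mx.
  by rewrite raddfB /= (mxtrace_mulC P).
exact/psd_mxtrace_ge0/psd_congruence.
Qed.

Lemma mxtrace_quadratic_ge0 (N A B : M) (s : R) : psd N ->
  0 <= s ^+ 2 * cRe (\tr (adj A *m N *m A)) - 2 * s * cRe (\tr (adj A *m N *m B))
       + cRe (\tr (adj B *m N *m B)).
Proof.
move=> pN.
have := Re_ge0 (psd_mxtrace_ge0 (psd_congruence (s%:C *: A - B) pN)).
have cross : \tr (adj B *m N *m A) = (\tr (adj A *m N *m B))^*.
  by rewrite -mxtrace_adjmx !adjmxM adjmxK (psd_adjmx pN) mulmxA.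
rewrite adjmxB adjmxZ [_^* *: _](_ : _ = s%:C *: adj A); last first.
  by congr (_ *: _); exact: conjc_real.
rewrite !mulmxBl !mulmxBr -!scalemxAl -!scalemxAr.
rewrite !mxtraceD !raddfN /= !mxtraceZ (mxtraceD (_ *: _)) raddfN mxtraceZ cross.
have real_part (a b c : C) :
    0 <= cRe (s%:C * (s%:C * a) - s%:C * b - (s%:C * b^* - c)) ->
    0 <= s ^+ 2 * cRe a - 2 * s * cRe b + cRe c.
  by case: a b c => [a1 a2] [b1 b2] [c1 c2] /=; nra.
exact: real_part.
Qed.

Lemma mxtrace_cauchy_schwarz (N A B : M) : psd N ->
  cRe (\tr (adj A *m N *m B)) <=
  Num.sqrt (cRe (\tr (adj A *m N *m A)) * cRe (\tr (adj B *m N *m B))).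
Proof.
move=> pN; apply: le_sqrt_of_quadratic_ge0.
- exact/Re_ge0/psd_mxtrace_ge0/psd_congruence.
- exact/Re_ge0/psd_mxtrace_ge0/psd_congruence.
- by move=> s _; apply: mxtrace_quadratic_ge0.
Qed.

(* Polar decomposition: [X = U |X|] with [U = X |X|^+] a partial isometry. *)
Lemma trnorm_polar (X : M) : exists U : M,
  (U *m adj U) *m (U *m adj U) = U *m adj U /\ trnorm X = cRe (\tr (adj U *m X)).
Proof.
have pS := psd_sqrt_psd (adj X *m X); have eS := psd_sqrtK (psd_gram X).
set S := psd_sqrt _ in pS eS *.
have [T [hT eT1 eT2]] := psd_pinv pS.
exists (X *m T); rewrite /trnorm -/S; split.
  have -> : X *m T *m adj (X *m T) *m (X *m T *m adj (X *m T)) =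
            X *m (T *m T *m (S *m S) *m T *m T) *m adj X.
    by rewrite adjmxM hT eS !mulmxA.
  by rewrite eT2 adjmxM hT !mulmxA.
by rewrite adjmxM hT -mulmxA -eS eT1.
Qed.

Lemma fidelity_le_measured (rb rho Q : M) :
  psd rb -> psd rho -> psd Q -> psd (1%:M - Q) ->
  fidelity rb rho <=
    Num.sqrt (cRe (\tr (Q *m rb)) * cRe (\tr (Q *m rho))) +
    Num.sqrt (cRe (\tr ((1%:M - Q) *m rb)) * cRe (\tr ((1%:M - Q) *m rho))).
Proof.
move=> prb prho pQ pQ'; rewrite /fidelity.
have hP := psd_adjmx (psd_sqrt_psd rb); have hS := psd_adjmx (psd_sqrt_psd rho).
set P := psd_sqrt rb in hP *; set S := psd_sqrt rho in hS *.
have [U [iPi ->]] := trnorm_polar (P *m S).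
set A := P *m U.
have A_bound (N : M) : psd N -> cRe (\tr (adj A *m N *m A)) <= cRe (\tr (N *m rb)).
  move=> pN; apply: Re_le.
  have -> : \tr (adj A *m N *m A) = \tr (adj P *m N *m P *m (U *m adj U)).
    by rewrite /A adjmxM hP -!mulmxA mxtrace_mulC !mulmxA.
  apply: le_trans (mxtrace_mul_proj_le _ iPi (psd_congruence P pN)) _.
    by rewrite adjmxM adjmxK.
  by rewrite hP -mulmxA mxtrace_mulC -mulmxA psd_sqrtK.
have S_trace (N : M) : \tr (adj S *m N *m S) = \tr (N *m rho).
  by rewrite hS -mulmxA mxtrace_mulC -mulmxA psd_sqrtK.
have measured_term (N : M) : psd N ->
    cRe (\tr (adj A *m N *m S)) <= Num.sqrt (cRe (\tr (N *m rb)) * cRe (\tr (N *m rho))).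
  move=> pN; apply: le_trans (mxtrace_cauchy_schwarz A S pN) _.
  rewrite S_trace; apply/ler_wsqrtr/ler_wpM2r; last exact: A_bound.
  by rewrite -S_trace; apply/Re_ge0/psd_mxtrace_ge0/psd_congruence.
have -> : \tr (adj U *m (P *m S)) = \tr (adj A *m Q *m S) + \tr (adj A *m (1%:M - Q) *m S).
  by rewrite -mxtraceD -mulmxDl -mulmxDr addrC subrK mulmx1 /A adjmxM hP mulmxA.
by rewrite raddfD /=; apply: lerD; apply: measured_term.
Qed.

Lemma fidelity_ge0 (rb rho : M) : 0 <= fidelity rb rho.
Proof. exact/Re_ge0/psd_mxtrace_ge0/psd_sqrt_psd. Qed.

Lemma mxtrace_mul1Bl (Q X : M) : \tr ((1%:M - Q) *m X) = \tr X - \tr (Q *m X).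
Proof. by rewrite mulmxBl mul1mx raddfB. Qed.

Lemma DH_set_Dmax_set_le (rho sigma : M) (eps eps' x mu : R) :
  density rho -> psd sigma -> eps' < eps -> 0 <= eps' ->
  DH_set eps rho sigma x -> Dmax_set eps' rho sigma mu ->
  mu * (eps - eps') <= x * eps.
Proof.
move=> [prho trho] psig ee e0 [Q [pQ lQ eQ xQ]] [rb [prb trb lmu hF]].
have epos : 0 < eps := le_lt_trans e0 ee.
have xe : x * eps = cRe (\tr (Q *m sigma)).
  have eC : eps%:C != 0 by rewrite eq_complex /= (gt_eqF epos).
  by rewrite -(mulfVK eC (\tr _)) -xQ Re_real_mul.
set a := cRe (\tr (Q *m rho)); set b := cRe (\tr (Q *m rb)).
have a'_eq : cRe (\tr ((1%:M - Q) *m rho)) = 1 - a.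
  by rewrite mxtrace_mul1Bl raddfB /= trho.
have a1 : a <= 1.
  by have := Re_ge0 (psd_mxtrace_mul_ge0 lQ prho); rewrite a'_eq subr_ge0.
have b'_eq : cRe (\tr ((1%:M - Q) *m rb)) = cRe (\tr rb) - b.
  by rewrite mxtrace_mul1Bl raddfB.
have hb : a - eps' <= b.
  apply: (sub_le_of_fidelity_le (b' := cRe (\tr rb) - b) (F := fidelity rb rho)) hF e0.
  - by rewrite a1 andbT; apply/Re_ge0/psd_mxtrace_mul_ge0.
  - exact/Re_ge0/psd_mxtrace_mul_ge0.
  - by rewrite -b'_eq; apply/Re_ge0/psd_mxtrace_mul_ge0.
  - by rewrite addrC subrK; apply: Re_le trb.
  - exact: fidelity_ge0.
  - have := fidelity_le_measured prb prho pQ lQ.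
    by rewrite b'_eq a'_eq.
have hmu : mu * b <= x * eps.
  have := Re_ge0 (psd_mxtrace_mul_ge0 pQ lmu).
  by rewrite mulmxBr -scalemxAr raddfB /= mxtraceZ raddfB /= Re_real_mul xe subr_ge0.
have ea : eps <= a := Re_le eQ.
have x0 : 0 <= x * eps by rewrite xe; apply/Re_ge0/psd_mxtrace_mul_ge0.
have [mu0|mu0] := lerP 0 mu; nra.
Qed.

End PositiveOperators.

Theorem lemmaA6 (R : realType) (n : nat) (rho sigma : 'M[R[i]]_n)
  (eps eps' : R) :
  density rho -> psd sigma -> eps <= 1 -> eps' < eps -> 0 <= eps' ->
  (DH eps rho sigma <= Dmax eps' rho sigma + (log2 (eps / (eps - eps')))%:E)%E.
Proof.
move=> drho psig _ ee e0.
have epos : 0 < eps := le_lt_trans e0 ee.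
have kpos : 0 < eps - eps' by rewrite subr_gt0.
apply: neglog2_inf_le_sup; first exact: divr_gt0.
move=> x mu Ax Bmu; rewrite mulrA ler_pdivlMr //.
exact: DH_set_Dmax_set_le drho psig ee e0 Ax Bmu.
Qed.
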